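(* Let $\mathbf K$ be a commutative field and $p\in\mathbb N$. For $A\in\mathbf K^{\mathcal M_p}$ let $L_A\in\mathbf K^{\mathcal M_{p\times p}}$ be the lower triangular element of Toeplitz type defined, for $l\in\mathbb N$ and $0\le u,w<p^l$ (identified with words of length $l$), by $L_A[u,w]=A[u-w]$ if $u\ge w$ and $L_A[u,w]=0$ if $u<w$, where $u-w$ is read as a word of length $l$. Then $$\dim\big(\overline{A}^{rec}\big)\le\dim\big(\overline{L_A}^{rec}\big)\le 2\dim\big(\overline{A}^{rec}\big),$$ and $A\mapsto L_A$ induces an isomorphism of vector spaces between $\mathrm{Rec}_p(\mathbf K)$ and $\mathcal T_{p-rec}(\mathbf K)$, the space of lower triangular elements of Toeplitz type in $\mathrm{Rec}_{p\times p}(\mathbf K)$.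
   Context: For $p,q,l\in\mathbb N$, $\mathcal M_{p\times q}^l$ is the set of pairs $(U,W)$ of words of common length $l$ with $U\in\{0,\dots,p-1\}^l$, $W\in\{0,\dots,q-1\}^l$, $\mathcal M_{p\times q}=\bigcup_l\mathcal M_{p\times q}^l$, and $\mathcal M_p=\mathcal M_{p\times1}$ is identified with the free monoid of words over $\{0,\dots,p-1\}$. Words of length $l$ over $\{0,\dots,p-1\}$ are identified with $\{0,\dots,p^l-1\}$ via $u_1\dots u_l\mapsto\sum_{j=1}^lu_jp^{j-1}$, so that for $A\in\mathbf K^{\mathcal M_{p\times p}}$ the restriction $A[\mathcal M_{p\times p}^l]$ is a $p^l\times p^l$ matrix. $A$ is of Toeplitz type if every $A[\mathcal M_{p\times p}^l]$ is a Toeplitz matrix (entries depend only on $u-w$), and lower triangular if $A[u,w]=0$ whenever $u<w$. Shift maps: $(\rho(S,T)A)[U,W]=A[US,WT]$; the recursive closure $\overline{A}^{rec}$ is the span of all $\rho(S,T)A$; $\mathrm{Rec}_{p\times q}(\mathbf K)$ is the set of $A$ with $\dim\overline{A}^{rec}<\infty$, and $\mathrm{Rec}_p(\mathbf K)=\mathrm{Rec}_{p\times1}(\mathbf K)$. *)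

From mathcomp Require Import all_boot all_order all_algebra.
Set Implicit Arguments. Unset Strict Implicit. Unset Printing Implicit Defensive.
Import GRing.Theory.
Local Open Scope ring_scope.

(* A word of length l over {0,...,p-1} is identified with the integer
   u = sum_j u_j p^(j-1) in {0,...,p^l-1}; hence an element of
   K^{M_{pxq}} is a family, indexed by l, of functions on
   'I_(p^l) x 'I_(q^l)  (i.e. the p^l x q^l matrices A[M^l_{pxq}]). *)
Definition series (K : Type) (p q : nat) :=
  forall l : nat, 'I_(p ^ l) -> 'I_(q ^ l) -> K.

Definition series_eq (K : Type) (p q : nat) (A B : series K p q) : Prop :=
  forall l u w, A l u w = B l u w.

Lemma concat_word_proof (p l k : nat) (u : 'I_(p ^ l)) (s : 'I_(p ^ k)) :
  (u + p ^ l * s < p ^ (l + k))%N.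
Proof.
have hu := ltn_ord u; have hs := ltn_ord s.
rewrite expnD.
apply: (@leq_trans (p ^ l * s.+1)).
  by rewrite mulnS ltn_add2r.
by rewrite leq_mul2l hs orbT.
Qed.

(* concatenation U S of words (U of length l, S of length k), read as an
   integer: the letters of S are the high-order digits. *)
Definition concat_word (p l k : nat) (u : 'I_(p ^ l)) (s : 'I_(p ^ k))
  : 'I_(p ^ (l + k)) := Ordinal (concat_word_proof u s).

Definition rho (K : Type) (p q k : nat) (s : 'I_(p ^ k)) (t : 'I_(q ^ k))
  (A : series K p q) : series K p q :=
  fun l u w => A (l + k)%N (concat_word u s) (concat_word w t).
Arguments rho {K p q k} s t A l u w.

(* dim(closure^rec A) <= n : the recursive closure (span of all
   rho(S,T) A) is contained in the span of n elements of K^{M_{pxq}}. *)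
Definition rec_dim_le (K : fieldType) (p q : nat) (A : series K p q) (n : nat)
  : Prop :=
  exists F : 'I_n -> series K p q,
    forall (k : nat) (s : 'I_(p ^ k)) (t : 'I_(q ^ k)),
      exists c : 'I_n -> K,
        forall l u w, rho s t A l u w = \sum_(i < n) c i * F i l u w.

Definition is_rec (K : fieldType) (p q : nat) (A : series K p q) : Prop :=
  exists n, rec_dim_le A n.

Definition toeplitz (K : Type) (p : nat) (A : series K p p) : Prop :=
  forall l (u w u' w' : 'I_(p ^ l)), (u + w' = u' + w)%N ->
    A l u w = A l u' w'.

Definition lower_tri (K : fieldType) (p : nat) (A : series K p p) : Prop :=
  forall l (u w : 'I_(p ^ l)), (u < w)%N -> A l u w = 0.

Lemma one_word_proof (l : nat) : (0 < 1 ^ l)%N.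
Proof. by rewrite exp1n. Qed.

Definition zero_word (l : nat) : 'I_(1 ^ l) := Ordinal (one_word_proof l).

Lemma diff_word_proof (p l : nat) (u w : 'I_(p ^ l)) : (u - w < p ^ l)%N.
Proof. exact: leq_ltn_trans (leq_subr _ _) (ltn_ord u). Qed.

(* u - w read as a word of length l (meaningful when w <= u) *)
Definition diff_word (p l : nat) (u w : 'I_(p ^ l)) : 'I_(p ^ l) :=
  Ordinal (diff_word_proof u w).

(* L_A[u,w] = A[u - w] if u >= w, 0 otherwise ; A in K^{M_p} = K^{M_{px1}} *)
Definition LA (K : fieldType) (p : nat) (A : series K p 1) : series K p p :=
  fun l u w => if (w <= u)%N then A l (diff_word u w) (zero_word l) else 0.
Arguments LA {K p} A l u w.

From mathcomp Require Import all_boot all_order all_algebra.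
From mathcomp Require Import zify.
Set Implicit Arguments. Unset Strict Implicit. Unset Printing Implicit Defensive.
Import GRing.Theory.
Local Open Scope ring_scope.

(* A lower triangular Toeplitz B is determined by its first column B[u,0], and
   the first column of L_A is A; this gives the bijection, and the lower bound
   on the dimension because the first column of rho(S,0) B is rho(S,T) of the
   first column of B.  For the upper bound, subtracting WT from US digitwise
   with a borrow gives
     rho(S,T) L_A = [T <= S] L_{rho(S-T) A} + [T < S] U_{rho(S-T-1) A},
   where U_X = UA X is the strictly upper part X[u + p^l - w]; hence the
   L_{F_i} and U_{F_i} span the recursive closure of L_A whenever the F_i
   span that of A. *)

Lemma zero_wordE (l : nat) (w : 'I_(1 ^ l)) : w = zero_word l.
Proof. by apply: val_inj; case: w => /= w; rewrite exp1n; lia. Qed.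

Definition ord0_of (n : nat) (i : 'I_n) : 'I_n :=
  Ordinal (leq_ltn_trans (leq0n i) (ltn_ord i)).

Definition pred_ord (n : nat) (i : 'I_n) : 'I_n :=
  Ordinal (leq_ltn_trans (leq_pred i) (ltn_ord i)).

Section Span.

Variables (K : fieldType) (p q : nat).
Implicit Types (A B X : series K p q).

Definition span_of (n : nat) (F : 'I_n -> series K p q) X : Prop :=
  exists c : 'I_n -> K, forall l u w, X l u w = \sum_(i < n) c i * F i l u w.

Definition cat_family (T : Type) (n m : nat) (F1 : 'I_n -> T) (F2 : 'I_m -> T)
    (i : 'I_(n + m)) : T :=
  match split i with inl j => F1 j | inr j => F2 j end.

Lemma eq_span_of n (F : 'I_n -> series K p q) X Y :
  series_eq X Y -> span_of F Y -> span_of F X.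
Proof. by move=> eqXY [c hc]; exists c => l u w; rewrite eqXY. Qed.

Lemma span_of_scale n (F : 'I_n -> series K p q) X (a : K) :
  span_of F X -> span_of F (fun l u w => a * X l u w).
Proof.
move=> [c hc]; exists (fun i => a * c i) => l u w.
by rewrite hc mulr_sumr; apply: eq_bigr => i _; rewrite mulrA.
Qed.

Lemma span_of_add n m (F1 : 'I_n -> series K p q) (F2 : 'I_m -> series K p q)
    X1 X2 :
  span_of F1 X1 -> span_of F2 X2 ->
  span_of (cat_family F1 F2) (fun l u w => X1 l u w + X2 l u w).
Proof.
move=> [c1 h1] [c2 h2]; exists (cat_family c1 c2) => l u w.
rewrite h1 h2 big_split_ord /cat_family.
congr (_ + _); apply: eq_bigr => i _.
- by rewrite -[lshift m i]/(unsplit (inl i)) unsplitK.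
- by rewrite -[rshift n i]/(unsplit (inr i)) unsplitK.
Qed.

Lemma eq_rec_dim_le A B n : series_eq A B -> rec_dim_le A n -> rec_dim_le B n.
Proof.
move=> eqAB [F hF]; exists F => k s t.
by apply: eq_span_of (hF k s t) => l u w; rewrite /rho eqAB.
Qed.

End Span.

Section Concat.

Variables (p l k : nat).
Implicit Types (u w : 'I_(p ^ l)) (s t : 'I_(p ^ k)).

(* the word of u - w computed with a borrow, i.e. u + p^l - w; junk if w <= u *)
Definition borrow_word u w : 'I_(p ^ l) := insubd u (u + p ^ l - w)%N.

Lemma val_borrow_word u w : (u < w)%N -> val (borrow_word u w) = (u + p ^ l - w)%N.
Proof. by move=> lt_uw; rewrite val_insubd ifT //; have := ltn_ord w; lia. Qed.

Lemma leq_mul_succ (m n : nat) : (m < n)%N -> (p ^ l * m + p ^ l <= p ^ l * n)%N.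
Proof. by move=> lt_mn; rewrite addnC -mulnS leq_mul2l lt_mn orbT. Qed.

Lemma leq_concat_word u w s t :
  (concat_word w t <= concat_word u s)%N = (t < s)%N || (t == s :> nat) && (w <= u)%N.
Proof.
have := ltn_ord u; have := ltn_ord w; rewrite /= => ltw ltu.
case: (ltngtP t s) => [lt_ts | lt_st | eq_ts] /=.
- by have := leq_mul_succ lt_ts; lia.
- by have := leq_mul_succ lt_st; lia.
- by rewrite eq_ts leq_add2r.
Qed.

Lemma concat_word_sub u w s t : (w <= u)%N -> (t <= s)%N ->
  (concat_word u s - concat_word w t)%N = concat_word (diff_word u w) (diff_word s t).
Proof. by move=> le_wu le_ts /=; rewrite mulnBr; have := leq_mul2l (p ^ l) t s; lia. Qed.

Lemma concat_word_sub_borrow u w s t : (u < w)%N -> (t < s)%N ->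
  (concat_word u s - concat_word w t)%N =
  concat_word (borrow_word u w) (pred_ord (diff_word s t)).
Proof.
move=> lt_uw lt_ts /=; rewrite val_borrow_word //.
have := ltn_ord w; rewrite -subn1 !mulnBr muln1.
have := leq_mul_succ lt_ts; lia.
Qed.

End Concat.

Section Toeplitz.

Variables (K : fieldType) (p : nat).
Implicit Types (A : series K p 1) (B : series K p p).

Definition first_col B : series K p 1 := fun l u _ => B l u (ord0_of u).

Lemma rec_dim_le_first_col B n : rec_dim_le B n -> rec_dim_le (first_col B) n.
Proof.
move=> [F hF]; exists (fun i => first_col (F i)) => k s t.
have [c hc] := hF k s (ord0_of s).
exists c => l u w; rewrite -hc /rho /first_col.
by congr (B _ _ _); apply: val_inj => /=; rewrite muln0.
Qed.

Lemma first_col_LA A : series_eq (first_col (LA A)) A.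
Proof.
move=> l u w; rewrite /first_col /LA /= (zero_wordE w).
by congr (A _ _ _); apply: val_inj; rewrite /= subn0.
Qed.

Lemma LA_first_col B :
  lower_tri B -> toeplitz B -> series_eq (LA (first_col B)) B.
Proof.
move=> lowB toepB l u w; rewrite /LA /first_col.
case: leqP => [le_wu | lt_uw]; last by rewrite lowB.
by apply: toepB => /=; rewrite addn0 subnK.
Qed.

Lemma LA_linear (a : K) A1 A2 :
  series_eq (LA (fun l u w => a * A1 l u w + A2 l u w))
            (fun l u w => a * LA A1 l u w + LA A2 l u w).
Proof. by move=> l u w; rewrite /LA; case: ifP; rewrite ?mulr0 ?addr0. Qed.

Lemma LA_lower_tri A : lower_tri (LA A).
Proof. by move=> l u w lt_uw; rewrite /LA leqNgt lt_uw. Qed.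

Lemma LA_toeplitz A : toeplitz (LA A).
Proof.
move=> l u w u' w' eq_diff; rewrite /LA.
have -> : (w' <= u')%N = (w <= u)%N by apply/idP/idP; lia.
by case: ifP => // le_wu; congr (A _ _ _); apply: val_inj => /=; lia.
Qed.

End Toeplitz.

Definition UA (K : fieldType) (p : nat) (A : series K p 1) : series K p p :=
  fun l u w => if (u < w)%N then A l (borrow_word u w) (zero_word l) else 0.
Arguments UA {K p} A l u w.

Section Upper.

Variables (K : fieldType) (p : nat).
Implicit Types (A : series K p 1).

Lemma rho_LA A k (s t : 'I_(p ^ k)) :
  series_eq (rho s t (LA A))
    (fun l u w => (t <= s)%:R * LA (rho (diff_word s t) (zero_word k) A) l u w
       + (t < s)%:R * UA (rho (pred_ord (diff_word s t)) (zero_word k) A) l u w).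
Proof.
move=> l u w; rewrite /rho /LA /UA leq_concat_word !(zero_wordE (concat_word _ _)).
case: (ltngtP t s) => [lt_ts | lt_st | eq_ts] /=.
- rewrite !mul1r.
  case: leqP => [le_wu | lt_uw]; rewrite ?addr0 ?add0r.
  + by congr (A _ _ _); apply: val_inj; exact: concat_word_sub (ltnW lt_ts).
  + by congr (A _ _ _); apply: val_inj; exact: concat_word_sub_borrow.
- by rewrite !mul0r addr0.
- rewrite mul1r mul0r addr0; case: leqP => // le_wu.
  by congr (A _ _ _); apply: val_inj; apply: concat_word_sub; rewrite ?eq_ts.
Qed.

Lemma span_of_LA n (G : 'I_n -> series K p 1) A :
  span_of G A -> span_of (fun i => LA (G i)) (LA A).
Proof.
move=> [c hc]; exists c => l u w; rewrite /LA; case: ifP => _; first exact: hc.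
by rewrite big1 // => i _; rewrite mulr0.
Qed.

Lemma span_of_UA n (G : 'I_n -> series K p 1) A :
  span_of G A -> span_of (fun i => UA (G i)) (UA A).
Proof.
move=> [c hc]; exists c => l u w; rewrite /UA; case: ifP => _; first exact: hc.
by rewrite big1 // => i _; rewrite mulr0.
Qed.

Lemma rec_dim_le_LA A n : rec_dim_le A n -> rec_dim_le (LA A) (2 * n).
Proof.
move=> [G hG]; rewrite mul2n -addnn.
exists (cat_family (fun i => LA (G i)) (fun i => UA (G i))) => k s t.
apply: eq_span_of (rho_LA A s t) _.
by apply: span_of_add; apply: span_of_scale; [apply: span_of_LA | apply: span_of_UA].
Qed.

End Upper.

Theorem mainTheorem10 (K : fieldType) (p : nat) :
  (* dim(A^rec) <= dim(L_A^rec)  (in N u {oo}) *)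
  (forall (A : series K p 1) (n : nat), rec_dim_le (LA A) n -> rec_dim_le A n) /\
  (* dim(L_A^rec) <= 2 dim(A^rec)  (in N u {oo}) *)
  (forall (A : series K p 1) (n : nat), rec_dim_le A n -> rec_dim_le (LA A) (2 * n)) /\
  (* A |-> L_A is linear *)
  (forall (a : K) (A B : series K p 1),
     series_eq (LA (fun l u w => a * A l u w + B l u w))
               (fun l u w => a * LA A l u w + LA B l u w)) /\
  (* it maps Rec_p(K) into T_{p-rec}(K) *)
  (forall A : series K p 1,
     is_rec A -> [/\ is_rec (LA A), lower_tri (LA A) & toeplitz (LA A)]) /\
  (* injectively *)
  (forall A B : series K p 1, is_rec A -> is_rec B ->
     series_eq (LA A) (LA B) -> series_eq A B) /\
  (* and onto T_{p-rec}(K) *)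
  (forall B : series K p p, is_rec B -> lower_tri B -> toeplitz B ->
     exists A : series K p 1, is_rec A /\ series_eq (LA A) B).
Proof.
split; [|split; [|split; [|split; [|split]]]].
- move=> A n /rec_dim_le_first_col; apply: eq_rec_dim_le; exact: first_col_LA.
- exact: rec_dim_le_LA.
- exact: LA_linear.
- move=> A [n recA]; split; [|exact: LA_lower_tri|exact: LA_toeplitz].
  by exists (2 * n)%N; apply: rec_dim_le_LA.
- move=> A B _ _ eq_LA l u w.
  by rewrite -(first_col_LA A) -(first_col_LA B) /first_col eq_LA.
- move=> B [n recB] lowB toepB; exists (first_col B); split; last exact: LA_first_col.
  by exists n; apply: rec_dim_le_first_col.
Qed.
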